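(* Let $\mathfrak N=\mathcal V\oplus\mathfrak Z$ be a two-step nilpotent Lie algebra of type $(p,q)$ with $[\mathfrak N,\mathfrak N]=\mathfrak Z$ equal to the center. Let $C=(C_1,\dots,C_p)\in\mathfrak{so}(q)^p$ be its structure matrices with respect to some adapted basis, viewed as linear maps $\mathbb R^q\to\mathbb R^q$. Then $\mathfrak N$ is a direct sum of two nonzero ideals if and only if there is a basis $\{A_1,\dots,A_l\}\cup\{B_1,\dots,B_k\}$ of $\mathrm{span}\{C_1,\dots,C_p\}\subset\mathfrak{so}(q)$ such that $\mathbb R^q=\mathcal V_1\oplus\mathcal V_2$, where $\mathcal V_2=\bigcap_{i=1}^l\ker A_i$ and $\mathcal V_1=\bigcap_{i=1}^k\ker B_i$.
   Context: A two-step nilpotent Lie algebra $\mathfrak N$ has type $(p,q)$ if $\dim[\mathfrak N,\mathfrak N]=p$ and the codimension is $q$. An adapted basis is a basis $\{v_1,\dots,v_q,Z_1,\dots,Z_p\}$ of $\mathfrak N$ where $\{Z_k\}$ is a basis of $[\mathfrak N,\mathfrak N]$. The structure matrices $C_k\in\mathfrak{so}(q)$ (real skew-symmetric $q\times q$ matrices) are defined by $[v_i,v_j]=\sum_k(C_k)_{ij}Z_k$. We identify $\mathcal V=\mathrm{span}\{v_i\}$ with $\mathbb R^q$. *)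

From HB Require Import structures.
From mathcomp Require Import all_boot all_order all_algebra.
Set Implicit Arguments. Unset Strict Implicit. Unset Printing Implicit Defensive.
Import Order.TTheory GRing.Theory Num.Theory.
Local Open Scope ring_scope.

(* The Lie algebra N = V (+) Z is modelled on row vectors 'rV_(q + p):
   the first q coordinates are the coordinates on the adapted basis v_1..v_q of V,
   the last p coordinates those on Z_1..Z_p.  Given the structure matrices
   C : 'I_p -> 'M_q, the bracket is
     [x, y] = sum_k (sum_{i,j} x_i (C_k)_{ij} y_j) Z_k,
   i.e. [v_i, v_j] = sum_k (C_k)_{ij} Z_k and Z is central. *)
Definition lie_bracket (R : fieldType) (p q : nat) (C : 'I_p -> 'M[R]_q)
  (x y : 'rV[R]_(q + p)) : 'rV[R]_(q + p) :=
  row_mx 0 (\row_k (lsubmx x *m C k *m (lsubmx y)^T) 0 0).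

Definition is_ideal (R : fieldType) (p q : nat) (C : 'I_p -> 'M[R]_q)
  (I : {vspace 'rV[R]_(q + p)}) : Prop :=
  forall x y : 'rV[R]_(q + p), y \in I -> lie_bracket C x y \in I.

Definition decomposable (R : fieldType) (p q : nat) (C : 'I_p -> 'M[R]_q) : Prop :=
  exists I J : {vspace 'rV[R]_(q + p)},
    [/\ is_ideal C I, is_ideal C J, I != 0%VS, J != 0%VS &
        ((I + J)%VS = fullv /\ (I :&: J)%VS = 0%VS)].

(* Kernel of a matrix A viewed as the linear map x |-> A x on R^q, represented
   by row vectors: the row space of kermx A^T is {x | A *m x^T = 0}. *)
Definition ker_map (R : fieldType) (q : nat) (A : 'M[R]_q) : 'M[R]_q :=
  kermx A^T.

From HB Require Import structures.
From mathcomp Require Import all_boot all_order all_algebra zify.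
Import Order.TTheory GRing.Theory Num.Theory.
Set Implicit Arguments. Unset Strict Implicit. Unset Printing Implicit Defensive.
Local Open Scope ring_scope.

(* Write [u, w]_Z for the
   Z-valued bracket of u, w in V, and for a linear form om on Z let
   cmat om = sum_k om_k C_k, so that om([u, w]_Z) = u (cmat om) w^T.
   - If N = I (+) J with I, J nonzero ideals, then since the center of N is
     Z one gets Z = (I \cap Z) (+) (J \cap Z), both parts nonzero.  Taking a
     basis of Z adapted to this splitting, the structure matrices cmat of the
     dual coordinate forms form a basis A ++ B of span{C_k}; the A_i kill
     the V-parts of J, the B_j those of I, and a vector killed by all of
     them commutes with V, hence vanishes.
   - Conversely, for such a basis A ++ B, the coordinates of the A_i and the
     B_j on (C_k) form a basis of F^p; their annihilators T_A, T_B split Z,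
     and (ker B) (+) T_B and (ker A) (+) T_A are complementary ideals. *)

Section LinearAlgebra.
Variable F : fieldType.

Lemma nth_mktuple (vT : vectType F) n (f : 'I_n -> vT) (i : 'I_n) :
  [tuple f j | j < n]`_i = f i.
Proof. by rewrite -tnth_nth tnth_mktuple. Qed.

Lemma coord_cat_lshift (vT : vectType F) n m (e : n.-tuple vT) (f : m.-tuple vT)
    (i : 'I_n) z :
  free [tuple of e ++ f] -> z \in <<f>>%VS -> coord [tuple of e ++ f] (lshift m i) z = 0.
Proof.
move=> free_ef /coord_span->; rewrite linear_sum big1 // => j _.
rewrite linearZ /= -tnth_nth -(tnth_rshift e) (tnth_nth 0).
by rewrite coord_free // eq_rlshift mulr0.
Qed.

Lemma coord_cat_rshift (vT : vectType F) n m (e : n.-tuple vT) (f : m.-tuple vT)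
    (j : 'I_m) z :
  free [tuple of e ++ f] -> z \in <<e>>%VS -> coord [tuple of e ++ f] (rshift n j) z = 0.
Proof.
move=> free_ef /coord_span->; rewrite linear_sum big1 // => i _.
rewrite linearZ /= -tnth_nth -(tnth_lshift _ f) (tnth_nth 0).
by rewrite coord_free // eq_lrshift mulr0.
Qed.

Lemma mx_form_eq0 m n (M : 'M[F]_(m, n)) (u : 'rV[F]_n) :
  (forall w : 'rV[F]_m, (w *m M *m u^T) 0 0 = 0) -> M *m u^T = 0.
Proof.
move=> Mu0; apply/matrixP => i j; rewrite (ord1 j) [RHS]mxE -(Mu0 (delta_mx 0 i)).
by rewrite -mulmxA -rowE [RHS]mxE.
Qed.

Lemma mulmx_tr_entry m n (z : 'rV[F]_n) (M : 'M[F]_(m, n)) j :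
  (z *m M^T) 0 j = (z *m (row j M)^T) 0 0.
Proof. by rewrite !mxE; apply: eq_bigr => i _; rewrite !mxE. Qed.

Lemma sub_ker_map n (M : 'M[F]_n) (u : 'rV[F]_n) :
  (u <= ker_map M)%MS = (M *m u^T == 0).
Proof.
by rewrite /ker_map sub_kermx -(inj_eq trmx_inj) trmx_mul trmxK trmx0.
Qed.

Lemma complementary_annihilators l k p (Ma : 'M[F]_(l, p)) (Mb : 'M[F]_(k, p)) :
  (l + k = p)%N -> row_full (col_mx Ma Mb) ->
  [/\ \rank (kermx Ma^T) = k, \rank (kermx Mb^T) = l,
      (kermx Mb^T + kermx Ma^T == (1%:M : 'M[F]_p))%MS
    & (kermx Mb^T :&: kermx Ma^T == (0 : 'M[F]_p))%MS].
Proof.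
move=> lkp /eqP rk_col.
have [rkA rkB] : \rank Ma = l /\ \rank Mb = k.
  have [+ _] := mxrank_adds_leqif Ma Mb; rewrite addsmxE rk_col.
  by have := rank_leq_row Ma; have := rank_leq_row Mb; lia.
have rk_kerA : \rank (kermx Ma^T) = k by rewrite mxrank_ker mxrank_tr rkA; lia.
have rk_kerB : \rank (kermx Mb^T) = l by rewrite mxrank_ker mxrank_tr rkB; lia.
have cap0 : (kermx Mb^T :&: kermx Ma^T == (0 : 'M[F]_p))%MS.
  have ker0 : kermx (col_mx Ma Mb)^T = 0.
    by apply/eqP; rewrite kermx_eq0 /row_free mxrank_tr rk_col.
  rewrite /eqmx sub0mx andbT -ker0 sub_kermx tr_col_mx mul_mx_row.
  have /eqP -> : (kermx Mb^T :&: kermx Ma^T)%MS *m Ma^T == 0.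
    by rewrite -sub_kermx capmxSr.
  have /eqP -> : (kermx Mb^T :&: kermx Ma^T)%MS *m Mb^T == 0.
    by rewrite -sub_kermx capmxSl.
  by rewrite row_mx0.
split=> //; apply/andP; split; first exact: submx1.
rewrite sub1mx /row_full eqn_leq rank_leq_col /=.
have := mxrank_sum_cap (kermx Mb^T) (kermx Ma^T).
by rewrite (eqmx_rank cap0) mxrank0 rk_kerA rk_kerB; lia.
Qed.

(* The subspace {x | x_V \in S, x_Z \in T} of F^q (+) F^p, the row vectors
   of length q + p, for row spaces S of F^q and T of F^p. *)
Definition prod_space q p (S : 'M[F]_q) (T : 'M[F]_p) : {vspace 'rV[F]_(q + p)} :=
  lker (linfun (mulmxr (block_mx (cokermx S) 0 0 (cokermx T)))).

Lemma mem_prod_space q p (S : 'M[F]_q) (T : 'M[F]_p) x :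
  (x \in prod_space S T) = (lsubmx x <= S)%MS && (rsubmx x <= T)%MS.
Proof.
rewrite memv_ker lfunE /= -{1}(hsubmxK x) mul_row_block !mulmx0 addr0 add0r.
by rewrite row_mx_eq0 !submxE.
Qed.

Lemma prod_space_neq0 q p (S : 'M[F]_q) (T : 'M[F]_p) :
  T != 0 -> prod_space S T != 0%VS.
Proof.
rewrite -nz_row_eq0 => nzT; apply: contra nzT => /eqP S0.
have : row_mx 0 (nz_row T) \in prod_space S T.
  by rewrite mem_prod_space row_mxKl row_mxKr sub0mx nz_row_sub.
by rewrite S0 memv0 -row_mx0 => /eqP/eq_row_mx[_ ->].
Qed.

Lemma sub_cap0 n m (U1 U2 : 'M[F]_n) (u : 'M[F]_(m, n)) :
  (U1 :&: U2 == (0 : 'M[F]_n))%MS -> (u <= U1)%MS -> (u <= U2)%MS -> u = 0.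
Proof.
move=> /andP[cap0 _] uU1 uU2; apply/eqP; rewrite -submx0.
by apply: submx_trans cap0; rewrite sub_capmx uU1.
Qed.

Lemma prod_space_complement q p (S1 S2 : 'M[F]_q) (T1 T2 : 'M[F]_p) :
  (S1 + S2 == (1%:M : 'M[F]_q))%MS -> (S1 :&: S2 == (0 : 'M[F]_q))%MS ->
  (T1 + T2 == (1%:M : 'M[F]_p))%MS -> (T1 :&: T2 == (0 : 'M[F]_p))%MS ->
  (prod_space S1 T1 + prod_space S2 T2)%VS = fullv /\
  (prod_space S1 T1 :&: prod_space S2 T2)%VS = 0%VS.
Proof.
move=> /andP[_ sumS] capS /andP[_ sumT] capT; split.
  apply/eqP; rewrite eqEsubv subvf; apply/subvP => x _; rewrite -(hsubmxK x).
  have /sub_addsmxP[[a b] ->] : (lsubmx x <= S1 + S2)%MS.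
    exact: submx_trans (submx1 _) sumS.
  have /sub_addsmxP[[c d] ->] : (rsubmx x <= T1 + T2)%MS.
    exact: submx_trans (submx1 _) sumT.
  rewrite -add_row_mx /=; apply: memv_add;
    by rewrite mem_prod_space row_mxKl row_mxKr !submxMl.
apply/eqP; rewrite -subv0; apply/subvP => x /memv_capP[xI xJ].
have /andP[xS1 xT1] : (lsubmx x <= S1)%MS && (rsubmx x <= T1)%MS.
  by rewrite -mem_prod_space.
have /andP[xS2 xT2] : (lsubmx x <= S2)%MS && (rsubmx x <= T2)%MS.
  by rewrite -mem_prod_space.
by rewrite memv0 -(hsubmxK x) (sub_cap0 capS xS1 xS2) (sub_cap0 capT xT1 xT2) row_mx0.
Qed.

End LinearAlgebra.

Section StructureMatrices.
Variables (F : fieldType) (p q : nat) (C : 'I_p -> 'M[F]_q).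

Local Notation Ct := [tuple C k | k < p].

Definition zbracket (u w : 'rV[F]_q) : 'rV[F]_p := \row_k (u *m C k *m w^T) 0 0.

Lemma lie_bracketE x y : lie_bracket C x y = row_mx 0 (zbracket (lsubmx x) (lsubmx y)).
Proof. by []. Qed.

Lemma zbracketNr u w : zbracket u (- w) = - zbracket u w.
Proof.
apply/rowP => k; rewrite !mxE -sumrN; apply: eq_bigr => j _.
by rewrite !mxE mulrN.
Qed.

Definition cmat (om : 'rV[F]_p) : 'M[F]_q := \sum_k om 0 k *: C k.

Lemma zbracket_cmat u w om :
  (zbracket u w *m om^T) 0 0 = (u *m cmat om *m w^T) 0 0.
Proof.
rewrite mulmx_sumr mulmx_suml summxE mxE; apply: eq_bigr => k _.
by rewrite -scalemxAr -scalemxAl [RHS]mxE !mxE mulrC.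
Qed.

Lemma cmat_delta m : cmat (delta_mx 0 m) = C m.
Proof.
rewrite /cmat (bigD1 m) //= mxE !eqxx scale1r big1 ?addr0 // => k /negPf nkm.
by rewrite mxE nkm andbF scale0r.
Qed.

Lemma cmat_comb n (c : 'I_n -> F) (om : 'I_n -> 'rV[F]_p) :
  cmat (\sum_i c i *: om i) = \sum_i c i *: cmat (om i).
Proof.
under [RHS]eq_bigr do rewrite scaler_sumr.
rewrite exchange_big; apply: eq_bigr => k _; rewrite summxE scaler_suml.
by apply: eq_bigr => i _; rewrite mxE scalerA.
Qed.

Lemma cmat_span om : cmat om \in <<Ct>>%VS.
Proof.
by apply: memv_suml => k _; apply/memvZ/memv_span; rewrite map_f ?mem_enum.
Qed.

Definition zcoord (M : 'M[F]_q) : 'rV[F]_p := \row_k coord Ct k M.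

Lemma cmatK M : M \in <<Ct>>%VS -> cmat (zcoord M) = M.
Proof.
move=> /coord_span {2}->; apply: eq_bigr => k _.
by rewrite mxE nth_mktuple.
Qed.

Lemma zcoordC m : free Ct -> zcoord (C m) = delta_mx 0 m.
Proof.
move=> freeC; apply/rowP => k; rewrite !mxE -(nth_mktuple C m) coord_free //.
by rewrite eq_sym.
Qed.

Lemma zcoord_comb n (c : 'I_n -> F) (M : 'I_n -> 'M[F]_q) :
  zcoord (\sum_i c i *: M i) = \sum_i c i *: zcoord (M i).
Proof.
apply/rowP => k; rewrite mxE linear_sum summxE.
by apply: eq_bigr => i _; rewrite linearZ !mxE.
Qed.

Lemma row_full_zcoord n (X : n.-tuple 'M[F]_q) (M : 'M[F]_(n, p)) :
  free Ct -> <<X>>%VS = <<Ct>>%VS -> (forall i, row i M = zcoord X`_i) -> row_full M.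
Proof.
move=> freeC spanX rowM; rewrite -sub1mx; apply/row_subP => m.
rewrite row1 -(zcoordC m freeC).
have /coord_span -> : C m \in <<X>>%VS.
  by rewrite spanX memv_span // map_f ?mem_enum.
rewrite zcoord_comb; apply: summx_sub => i _.
by apply: scalemx_sub; rewrite -rowM row_sub.
Qed.

Definition dual_cmat n (X : n.-tuple 'rV[F]_p) (i : 'I_n) : 'M[F]_q :=
  cmat (\row_m coord X i (delta_mx 0 m)).

Lemma dual_cmatE n (X : n.-tuple 'rV[F]_p) i u w :
  (u *m dual_cmat X i *m w^T) 0 0 = coord X i (zbracket u w).
Proof.
rewrite -zbracket_cmat {2}(row_sum_delta (zbracket u w)) linear_sum mxE.
by apply: eq_bigr => m _; rewrite linearZ !mxE.
Qed.

Lemma structure_expand n (X : n.-tuple 'rV[F]_p) m :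
  <<X>>%VS = fullv -> C m = \sum_(i < n) (X`_i) 0 m *: dual_cmat X i.
Proof.
move=> spanX; rewrite -cmat_comb -cmat_delta; congr cmat; apply/rowP => m'.
rewrite summxE; transitivity ((delta_mx 0 m' : 'rV[F]_p) 0 m).
  by rewrite !mxE eq_sym.
have /coord_span {1}-> : delta_mx 0 m' \in <<X>>%VS by rewrite spanX memvf.
by rewrite summxE; apply: eq_bigr => i _; rewrite !mxE mulrC.
Qed.


Definition zembed : 'Hom('rV[F]_p, 'rV[F]_(q + p)) :=
  linfun (mulmxr (row_mx 0 1%:M : 'M[F]_(p, q + p))).

Definition zpart (I : {vspace 'rV[F]_(q + p)}) : {vspace 'rV[F]_p} :=
  (zembed @^-1: I)%VS.

Lemma mem_zpart I z : (z \in zpart I) = (row_mx 0 z \in I).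
Proof. by rewrite -memv_preim lfunE /= mul_mx_row mulmx0 mulmx1. Qed.

Lemma zbracket_zpart I y w :
  is_ideal C I -> y \in I -> zbracket w (lsubmx y) \in zpart I.
Proof.
move=> idI yI; rewrite mem_zpart.
by have := idI (row_mx w 0) y yI; rewrite lie_bracketE row_mxKl.
Qed.

Lemma zpart_cap I J : (I :&: J)%VS = 0%VS -> (zpart I :&: zpart J)%VS = 0%VS.
Proof.
move=> capIJ; apply/eqP; rewrite -subv0; apply/subvP => z /memv_capP[].
rewrite !mem_zpart memv0 => zI zJ.
have : row_mx 0 z \in (I :&: J)%VS by apply/memv_capP.
by rewrite capIJ memv0 -row_mx0 => /eqP/eq_row_mx[_ ->].
Qed.

Section TrivialCenter.
Hypothesis Hskew : forall k, (C k)^T = - C k.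
Hypothesis Hcenter : forall x : 'rV[F]_q, (forall k, x *m C k = 0) -> x = 0.

(* By skew-symmetry, the center of N meets V trivially also in the form
   "C_k u = 0 for all k implies u = 0". *)
Lemma center_trivialT (u : 'rV[F]_q) : (forall k, C k *m u^T = 0) -> u = 0.
Proof.
move=> Cu; apply: Hcenter => k; apply: trmx_inj.
by rewrite trmx_mul Hskew mulNmx Cu oppr0 trmx0.
Qed.

Lemma center_trivial (v : 'rV[F]_q) : (forall w, zbracket w v = 0) -> v = 0.
Proof.
move=> bv; apply: center_trivialT => k; apply: mx_form_eq0 => w.
by have := congr1 (fun z : 'rV[F]_p => z 0 k) (bv w); rewrite /= mxE [RHS]mxE.
Qed.

Lemma zpart_neq0 I : is_ideal C I -> I != 0%VS -> zpart I != 0%VS.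
Proof.
move=> idI; apply: contra => /eqP ZI0; rewrite -subv0; apply/subvP => x xI.
have xV0 : lsubmx x = 0.
  by apply: center_trivial => w; apply/eqP; rewrite -memv0 -ZI0 zbracket_zpart.
have : rsubmx x \in zpart I by rewrite mem_zpart -xV0 hsubmxK.
by rewrite ZI0 !memv0 -{2}(hsubmxK x) xV0 => /eqP->; rewrite row_mx0.
Qed.

(* If x and y lie in ideals meeting trivially and x + y is central, then the
   V-part of x is central, hence zero. *)
Lemma ideal_vpart_central I J x y :
  is_ideal C I -> is_ideal C J -> (I :&: J)%VS = 0%VS ->
  x \in I -> y \in J -> lsubmx x + lsubmx y = 0 -> lsubmx x = 0.
Proof.
move=> idI idJ capIJ xI yJ /eqP; rewrite addr_eq0 => /eqP xVE.
apply: center_trivial => w; apply/eqP; rewrite -memv0 -(zpart_cap capIJ).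
by rewrite memv_cap zbracket_zpart //= xVE zbracketNr memvN zbracket_zpart.
Qed.

Lemma zpart_complement I J :
  is_ideal C I -> is_ideal C J -> (I + J)%VS = fullv -> (I :&: J)%VS = 0%VS ->
  (zpart I + zpart J)%VS = fullv /\ (zpart I :&: zpart J)%VS = 0%VS.
Proof.
move=> idI idJ sumIJ capIJ; split; last exact: zpart_cap.
apply/eqP; rewrite eqEsubv subvf; apply/subvP => z _.
have : row_mx 0 z \in (I + J)%VS by rewrite sumIJ memvf.
case/memv_addP => x xI [y yJ] /(congr1 (fun v => (lsubmx v, rsubmx v))) [].
rewrite row_mxKl row_mxKr !linearD /= => /esym xyV ->.
have xV0 := ideal_vpart_central idI idJ capIJ xI yJ xyV.
have yV0 : lsubmx y = 0 by rewrite xV0 add0r in xyV.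
by apply: memv_add; rewrite mem_zpart; [rewrite -xV0 | rewrite -yV0]; rewrite hsubmxK.
Qed.

End TrivialCenter.
End StructureMatrices.

Local Notation kernels A := (\bigcap_(i < _) ker_map (A i))%MS.

Section FromKernels.
Variables (F : fieldType) (p q : nat) (C : 'I_p -> 'M[F]_q).
Local Notation Ct := [tuple C k | k < p].

Lemma ideal_of_kernels n (A : 'I_n -> 'M[F]_q) :
  (forall i, A i \in <<Ct>>%VS) ->
  is_ideal C (prod_space (kernels A) (kermx (\matrix_i zcoord C (A i))^T)).
Proof.
move=> Aspan x y; rewrite !mem_prod_space lie_bracketE row_mxKl row_mxKr sub0mx /=.
move=> /andP[/sub_bigcapmxP yker _]; rewrite sub_kermx; apply/eqP/rowP => i.
rewrite mulmx_tr_entry rowK zbracket_cmat cmatK // -mulmxA.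
have /eqP -> : A i *m (lsubmx y)^T == 0 by rewrite -sub_ker_map yker.
by rewrite mulmx0 !mxE.
Qed.

Lemma decomposable_of_kernels l k (A : 'I_l -> 'M[F]_q) (B : 'I_k -> 'M[F]_q) :
  free Ct -> (0 < l)%N -> (0 < k)%N ->
  basis_of <<Ct>>%VS (map A (enum 'I_l) ++ map B (enum 'I_k)) ->
  (kernels B + kernels A == (1%:M : 'M[F]_q))%MS ->
  (kernels B :&: kernels A == (0 : 'M[F]_q))%MS ->
  decomposable C.
Proof.
move=> freeC l_gt0 k_gt0 /andP[/eqP spanAB freeAB] sumK capK.
pose Ma := \matrix_i zcoord C (A i); pose Mb := \matrix_i zcoord C (B i).
have Aspan i : A i \in <<Ct>>%VS.
  by rewrite -spanAB memv_span // mem_cat map_f ?mem_enum.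
have Bspan i : B i \in <<Ct>>%VS.
  by rewrite -spanAB memv_span // mem_cat map_f ?mem_enum ?orbT.
have lkp : (l + k = p)%N.
  move/eqP: freeAB; rewrite spanAB (eqP freeC) size_tuple size_cat !size_map.
  by rewrite -!enumT !size_enum_ord.
have full : row_full (col_mx Ma Mb).
  apply: (@row_full_zcoord _ _ _ C _ [tuple of mktuple A ++ mktuple B]) => // i.
  case: (split_ordP i) => j ->; rewrite ?rowKu ?rowKd rowK -tnth_nth.
    by rewrite tnth_lshift tnth_mktuple.
  by rewrite tnth_rshift tnth_mktuple.
have [rkA rkB sumT capT] := complementary_annihilators lkp full.
have [sumI capI] := prod_space_complement sumK capK sumT capT.
exists (prod_space (kernels B) (kermx Mb^T)), (prod_space (kernels A) (kermx Ma^T)).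
split=> //; [exact: ideal_of_kernels | exact: ideal_of_kernels | |];
  by apply: prod_space_neq0; rewrite -mxrank_eq0 ?rkA ?rkB -lt0n.
Qed.

End FromKernels.

Section FromIdeals.
Variables (F : fieldType) (p q : nat) (C : 'I_p -> 'M[F]_q).
Hypothesis Hskew : forall k, (C k)^T = - C k.
Hypothesis Hfree : free [tuple C k | k < p].
Hypothesis Hcenter : forall x : 'rV[F]_q, (forall k, x *m C k = 0) -> x = 0.
Variables I J : {vspace 'rV[F]_(q + p)}.
Hypotheses (idI : is_ideal C I) (idJ : is_ideal C J).
Hypotheses (nzI : I != 0%VS) (nzJ : J != 0%VS).
Hypotheses (sumIJ : (I + J)%VS = fullv) (capIJ : (I :&: J)%VS = 0%VS).

Local Notation Ct := [tuple C k | k < p].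

Let l := \dim (zpart I).
Let k := \dim (zpart J).
Let X : (l + k).-tuple 'rV[F]_p := [tuple of vbasis (zpart I) ++ vbasis (zpart J)].
Let A (i : 'I_l) := dual_cmat C X (lshift k i).
Let B (j : 'I_k) := dual_cmat C X (rshift l j).

(* X is a basis of Z, since Z is the direct sum of the central parts. *)
Lemma adapted_basis : free X /\ <<X>>%VS = fullv.
Proof.
have [sumZ capZ] := zpart_complement Hskew Hcenter idI idJ sumIJ capIJ.
have spanI := span_basis (vbasisP (zpart I)).
have spanJ := span_basis (vbasisP (zpart J)).
split; last by rewrite span_cat spanI spanJ.
by rewrite cat_free !(basis_free (vbasisP _)) /= spanI spanJ; apply/directv_addP.
Qed.

Lemma dim_split : (l + k = p)%N.
Proof.
have [sumZ capZ] := zpart_complement Hskew Hcenter idI idJ sumIJ capIJ.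
have := dimv_sum_cap (zpart I) (zpart J).
by rewrite sumZ capZ dimv0 addn0 dimvf dim_matrix mul1r => ->.
Qed.

(* The V-parts of J are killed by the A_i, those of I by the B_j: the
   brackets with them have no component along the other half of X. *)
Lemma kernels_of_J y : y \in J -> (lsubmx y <= kernels A)%MS.
Proof.
move=> yJ; apply/sub_bigcapmxP => i _; rewrite sub_ker_map.
apply/eqP/mx_form_eq0 => w; rewrite dual_cmatE coord_cat_lshift //.
  exact: (proj1 adapted_basis).
by rewrite (span_basis (vbasisP _)) zbracket_zpart.
Qed.

Lemma kernels_of_I y : y \in I -> (lsubmx y <= kernels B)%MS.
Proof.
move=> yI; apply/sub_bigcapmxP => j _; rewrite sub_ker_map.
apply/eqP/mx_form_eq0 => w; rewrite dual_cmatE coord_cat_rshift //.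
  exact: (proj1 adapted_basis).
by rewrite (span_basis (vbasisP _)) zbracket_zpart.
Qed.

(* V = ker B (+) ker A: decompose (v, 0) along N = I (+) J. *)
Lemma kernels_sum : (kernels B + kernels A == (1%:M : 'M[F]_q))%MS.
Proof.
apply/andP; split; first exact: submx1.
apply/row_subP => m; rewrite -[row m _](row_mxKl _ (0 : 'rV[F]_p)).
have : row_mx (row m 1%:M) (0 : 'rV[F]_p) \in (I + J)%VS by rewrite sumIJ memvf.
case/memv_addP => x xI [y yJ] ->; rewrite linearD /=.
by apply: addmx_sub_adds; [exact: kernels_of_I | exact: kernels_of_J].
Qed.

(* A vector killed by all dual structure matrices is killed by every C_m,
   hence vanishes since the center of N is Z. *)
Lemma kernels_trivial (u : 'rV[F]_q) :
  (u <= kernels B)%MS -> (u <= kernels A)%MS -> u = 0.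
Proof.
move=> /sub_bigcapmxP uB /sub_bigcapmxP uA; apply: (center_trivialT Hskew Hcenter) => m.
rewrite (structure_expand C m (proj2 adapted_basis)) mulmx_suml big1 // => i _.
have /eqP Xi_u : dual_cmat C X i *m u^T == 0.
  by case: (split_ordP i) => j ->; rewrite -sub_ker_map; [exact: uA | exact: uB].
by rewrite -scalemxAl Xi_u scaler0.
Qed.

Lemma kernels_cap : (kernels B :&: kernels A == (0 : 'M[F]_q))%MS.
Proof.
rewrite /eqmx sub0mx andbT; apply/row_subP => m.
have := row_sub m (kernels B :&: kernels A)%MS; rewrite sub_capmx => /andP[uB uA].
by rewrite (kernels_trivial uB uA) sub0mx.
Qed.

Lemma dual_basis : basis_of <<Ct>>%VS (map A (enum 'I_l) ++ map B (enum 'I_k)).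
Proof.
have spanAB : <<map A (enum 'I_l) ++ map B (enum 'I_k)>>%VS = <<Ct>>%VS.
  apply/eqP; rewrite eqEsubv; apply/andP; split; apply/span_subvP => M.
    by rewrite mem_cat => /orP[] /mapP[i _ ->]; apply: cmat_span.
  move=> /mapP[m _ ->]; rewrite (structure_expand C m (proj2 adapted_basis)).
  rewrite big_split_ord; apply: memvD; apply: memv_suml => i _;
    apply/memvZ/memv_span; rewrite mem_cat; apply/orP.
    by left; apply: (map_f A); rewrite mem_enum.
  by right; apply: (map_f B); rewrite mem_enum.
rewrite /basis_of spanAB eqxx /=; apply/eqP.
by rewrite spanAB (eqP Hfree) size_tuple size_cat !size_map -!enumT !size_enum_ord dim_split.
Qed.

Lemma splitting_basis_of_ideals :
  exists (l k : nat) (A : 'I_l -> 'M[F]_q) (B : 'I_k -> 'M[F]_q),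
    [/\ (0 < l)%N, (0 < k)%N,
        basis_of <<Ct>>%VS (map A (enum 'I_l) ++ map B (enum 'I_k)),
        (kernels B + kernels A == (1%:M : 'M[F]_q))%MS
      & (kernels B :&: kernels A == (0 : 'M[F]_q))%MS].
Proof.
exists l, k, A, B; split; [| | exact: dual_basis | exact: kernels_sum | exact: kernels_cap].
  by rewrite lt0n dimv_eq0 (zpart_neq0 Hskew Hcenter idI nzI).
by rewrite lt0n dimv_eq0 (zpart_neq0 Hskew Hcenter idJ nzJ).
Qed.

End FromIdeals.

Theorem mainTheorem9 (R : rcfType) (p q : nat) (C : 'I_p -> 'M[R]_q)
  (* two-step nilpotent: [N,N] <> 0 *)
  (Hp : (0 < p)%N)
  (* structure matrices lie in so(q) *)
  (Hskew : forall k, (C k)^T = - C k)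
  (* {Z_k} is a basis of [N,N]: the C_k are linearly independent *)
  (Hfree : free (map C (enum 'I_p)))
  (* the center of N is exactly Z *)
  (Hcenter : forall x : 'rV[R]_q, (forall k, x *m C k = 0) -> x = 0) :
  decomposable C <->
  exists (l k : nat) (A : 'I_l -> 'M[R]_q) (B : 'I_k -> 'M[R]_q),
    [/\ (0 < l)%N, (0 < k)%N,
        basis_of (<<map C (enum 'I_p)>>%VS)
                 (map A (enum 'I_l) ++ map B (enum 'I_k)),
        ((\bigcap_(i < k) ker_map (B i)) + (\bigcap_(i < l) ker_map (A i)) == (1%:M : 'M[R]_q))%MS
      & ((\bigcap_(i < k) ker_map (B i)) :&: (\bigcap_(i < l) ker_map (A i)) == (0 : 'M[R]_q))%MS].
Proof.
split.
  case=> I [J] [idI idJ nzI nzJ [sumIJ capIJ]].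
  exact: (splitting_basis_of_ideals Hskew Hfree Hcenter idI idJ nzI nzJ sumIJ capIJ).
case=> l [k] [A] [B] [l_gt0 k_gt0 basisAB sumK capK].
exact: (decomposable_of_kernels Hfree l_gt0 k_gt0 basisAB sumK capK).
Qed.
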